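(* Let $p\in(0,1)$, let $(\mathcal M,d,0)$ be a pointed $p$-metric space with $\mathcal M=\{0,x,y,z\}$ (four distinct points) and $\mathcal N=\{0,x,y\}$. Assume that none of the $p$-triangle inequalities among the distances between $0,x,y$ is an equality. Let $d'$ be the function on $\mathcal M\times\mathcal M$ with $d'=d$ on $\mathcal N\times\mathcal N$ and, for every bijection $u:\{1,2,3\}\to\mathcal N$, \[d'(u(1),z)=\Big(\frac{d^p(u(2),u(1))+d^p(u(3),u(1))-d^p(u(2),u(3))}{2}\Big)^{1/p}.\] Then $d'$ is a $p$-metric on $\mathcal M$ and, for $\mathcal M'=(\mathcal M,d',0)$ and all $a,b\in\mathbb R$, \[\|a\delta(x)+b\delta(y)\|_{\mathcal F_p(\mathcal M')}\le\|a\delta(x)+b\delta(y)\|_{\mathcal F_p(\mathcal M)}.\] Moreover, writing $d_x=d(x,0)$, $d_y=d(y,0)$, $d_{xy}=d(x,y)$, \[\|a\delta(x)+b\delta(y)\|_{\mathcal F_p(\mathcal M')}^p=d_x^p\tfrac{|a+b|^p+|a|^p-|b|^p}{2}+d_y^p\tfrac{|a+b|^p+|b|^p-|a|^p}{2}+d_{xy}^p\tfrac{|a|^p+|b|^p-|a+b|^p}{2},\] and $\|a\delta(x)+b\delta(y)\|_{\mathcal F_p(\mathcal M')}=\|a\delta(x)+b\delta(y)\|_{\mathcal F_p(\mathcal N)}$ if and only if $ab=0$ or $a=-b$.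
   Context: A $p$-metric space is a set with $d$ such that $d^p$ is a metric; pointed means a distinguished point $0$. A $p$-Banach space is a complete vector space with a $p$-norm. $\delta(x)$ is evaluation at $x$ on real functions vanishing at $0$, and $\mathcal F_p(\mathcal M)$ is the completion of $\mathrm{span}\{\delta(x)\}$ under $\|\sum a_i\delta(x_i)\|=\sup\|\sum a_if(x_i)\|_Y$ over $p$-Banach $Y$ and $1$-Lipschitz $f:\mathcal M\to Y$ with $f(0)=0$; $\mathcal N$ carries the restriction of $d$ and base point $0$. The $p$-triangle inequalities among $0,x,y$ are $d^p(u,w)\le d^p(u,v)+d^p(v,w)$ for $\{u,v,w\}=\{0,x,y\}$. *)

From HB Require Import structures.
From mathcomp Require Import all_boot all_order all_algebra.
From mathcomp Require Import all_classical all_reals.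
From mathcomp Require Import exp.
Set Implicit Arguments. Unset Strict Implicit. Unset Printing Implicit Defensive.
Import Order.TTheory GRing.Theory Num.Theory.
Local Open Scope classical_set_scope.
Local Open Scope ring_scope.

Section Defs.
Variable R : realType.

Definition is_pmetric (T : Type) (p : R) (d : T -> T -> R) : Prop :=
  (forall u v, 0 <= d u v) /\
  (forall u v, d u v = 0 <-> u = v) /\
  (forall u v, d u v = d v u) /\
  (forall u v w, d u w `^ p <= d u v `^ p + d v w `^ p).

Definition is_pnorm (V : lmodType R) (p : R) (nrm : V -> R) : Prop :=
  (forall v, 0 <= nrm v) /\
  (forall v, nrm v = 0 <-> v = 0) /\
  (forall (k : R) v, nrm (k *: v) = `|k| * nrm v) /\
  (forall u v, nrm (u + v) `^ p <= nrm u `^ p + nrm v `^ p).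

Definition pn_complete (V : lmodType R) (nrm : V -> R) : Prop :=
  forall s : nat -> V,
    (forall e : R, 0 < e -> exists N, forall m n, (N <= m)%N -> (N <= n)%N ->
        nrm (s m - s n) < e) ->
    exists l : V, forall e : R, 0 < e -> exists N, forall n, (N <= n)%N ->
        nrm (s n - l) < e.

(* Norm in F_p(S) (S a pointed p-metric subspace of (T,d) with base point o,
   o \in S) of the finitely supported molecule sum_i a_i delta(x_i), x_i in S:
   the supremum over all p-Banach spaces Y and all 1-Lipschitz f : S -> Y with
   f o = 0 of || sum_i a_i f(x_i) ||_Y.  (Values of f outside S are irrelevant.) *)
Definition free_pnorm (T : Type) (p : R) (d : T -> T -> R) (S : set T) (o : T)
    (mol : seq (R * T)) : R :=
  sup [set r | exists (V : lmodType R) (nrm : V -> R) (f : T -> V),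
         [/\ is_pnorm p nrm, pn_complete nrm, f o = 0,
             (forall u v, S u -> S v -> nrm (f u - f v) <= d u v) &
             r = nrm (\sum_(c <- mol) c.1 *: f c.2)]].

Definition gromov_ext (T : Type) (p : R) (d : T -> T -> R) (u1 u2 u3 : T) : R :=
  ((d u2 u1 `^ p + d u3 u1 `^ p - d u2 u3 `^ p) / 2) `^ (p^-1).

Definition dz (T : eqType) (p : R) (d : T -> T -> R) (o x y w : T) : R :=
  if w == x then gromov_ext p d x o y
  else if w == y then gromov_ext p d y o x
  else gromov_ext p d o x y.

Definition dprime (T : eqType) (p : R) (d : T -> T -> R) (o x y z : T)
    (u v : T) : R :=
  if u == z then (if v == z then 0 else dz p d o x y v)
  else if v == z then dz p d o x y u
  else d u v.

End Defs.

From HB Require Import structures.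
From mathcomp Require Import all_boot all_order all_algebra.
From mathcomp Require Import all_classical all_reals.
From mathcomp Require Import topology normedtype exp.
From mathcomp Require Import ring lra.
Import Order.TTheory GRing.Theory Num.Theory.
Import numFieldNormedType.Exports.
Local Open Scope classical_set_scope.
Local Open Scope ring_scope.
Set Implicit Arguments. Unset Strict Implicit. Unset Printing Implicit Defensive.

(* Let Lx, Ly, L0 be the Gromov products (o|y)_x, (o|x)_y, (x|y)_o of the metric d^p
   on N; the strict triangle inequalities make them positive, and d'^p is the star
   metric with centre z and legs of p-lengths Lx, Ly, L0 to x, y, o.  Put
   F(a,b) = |a|^p Lx + |b|^p Ly + |a+b|^p L0.  Writing
   a delta(x) + b delta(y) = a (delta(x) - delta(z)) + b (delta(y) - delta(z))
   + (a+b) (delta(z) - delta(o)) bounds its F_p(M')-norm by F(a,b)^(1/p), and an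
   embedding of M' into l_p^6 by cuts attains this value.  Moving part of the cut
   weights onto cuts that also contain z embeds (M,d) in the same way (a small linear
   programme, solvable thanks to the p-triangle inequalities through z), which gives
   the comparison with F_p(M) and the lower bound F(a,b)^(1/p) for F_p(N).  If ab = 0
   or a = -b the molecule is a single dipole and the F_p(N)-norm is exactly
   F(a,b)^(1/p).  Otherwise the quotient p-norm of F_p(N), an infimum over the ways of
   routing the molecule along the three edges of N, exceeds F(a,b) by a uniform
   amount, because t |-> |t|^p is strictly subadditive. *)

Section PowR.
Variable R : realType.
Implicit Types x y q m s u v : R.

Lemma powR_ler q x y : 0 <= q -> 0 <= x -> x <= y -> x `^ q <= y `^ q.
Proof.
by move=> q0 x0 xy; apply: ge0_ler_powR; rewrite ?nnegrE // (le_trans x0).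
Qed.

Lemma powR_ltr q x y : 0 < q -> 0 <= x -> x < y -> x `^ q < y `^ q.
Proof.
by move=> q0 x0 xy; apply: gt0_ltr_powR; rewrite ?nnegrE // (le_trans x0) ?ltW.
Qed.

Variable p : R.
Hypothesis p_gt0 : 0 < p.

Lemma powR0p : 0 `^ p = 0.
Proof. by rewrite powR0 ?gt_eqF. Qed.

Lemma powRVK x : 0 <= x -> (x `^ p^-1) `^ p = x.
Proof. by move=> x0; rewrite -powRrM mulVf ?gt_eqF // powRr1. Qed.

Lemma powRK x : 0 <= x -> (x `^ p) `^ p^-1 = x.
Proof. by move=> x0; rewrite -powRrM mulfV ?gt_eqF // powRr1. Qed.

Lemma powR_le_powRV x y : 0 <= x -> x `^ p <= y -> x <= y `^ p^-1.
Proof.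
move=> x0 xy; rewrite -(powRK x0).
by apply: powR_ler; rewrite ?powR_ge0 // invr_ge0 ltW.
Qed.

Hypothesis p_lt1 : p < 1.

(* Follows from Young's inequality with exponents 1/p and 1/(1-p). *)
Lemma bernoulli_powR s : 0 <= s -> (1 + s) `^ p <= 1 + p * s.
Proof.
move=> s0.
have young := @conjugate_powR _ ((1 + s) `^ p) 1 p^-1 (1 - p)^-1 (powR_ge0 _ _) ler01.
rewrite mulr1 powRK ?addr_ge0 // powR1 !invrK in young.
apply: le_trans (young _ _ _) _.
- by rewrite invr_gt0.
- by rewrite invr_gt0 subr_gt0.
- by rewrite addrC subrK.
- lra.
Qed.

Lemma powRD_le_max x y : 0 <= x -> x <= y -> (x + y) `^ p <= y `^ p + p * x `^ p.
Proof.
move=> x0 xy; have [y0|y_neq0] := eqVneq y 0.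
  rewrite y0 in xy *; have -> : x = 0 by apply/le_anti; rewrite xy x0.
  by rewrite addr0 powR0p mulr0 addr0.
have y_gt0 : 0 < y by rewrite lt_def y_neq0 (le_trans x0).
pose s := x / y.
have s0 : 0 <= s by rewrite divr_ge0 // ltW.
have s1 : s <= 1 by rewrite ler_pdivrMr // mul1r.
have -> : x = y * s by rewrite mulrCA divff ?mulr1.
clearbody s.
have -> : y * s + y = y * (1 + s) by rewrite mulrDr mulr1 addrC.
rewrite !powRM ?addr_ge0 ?(ltW y_gt0) //.
have s_le : s <= s `^ p.
  have [->|s_neq0] := eqVneq s 0; first by rewrite powR0p.
  by apply: ger1_powR; rewrite ?lt_def ?s_neq0 ?s0 // ltW.
have : (1 + s) `^ p <= 1 + p * s `^ p.
  by apply: le_trans (bernoulli_powR s0) _; rewrite lerD2l ler_wpM2l // ltW.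
by move/(ler_wpM2l (powR_ge0 y p)); lra.
Qed.

Lemma powRD_gap x y m : 0 <= m -> m <= x -> m <= y ->
  (x + y) `^ p + (1 - p) * m `^ p <= x `^ p + y `^ p.
Proof.
move=> m0 mx my.
have gap w : m <= w -> (1 - p) * m `^ p <= (1 - p) * w `^ p.
  by move=> mw; rewrite ler_wpM2l ?subr_ge0 ?powR_ler // ltW.
have [xy|yx] := leP x y.
  by have := powRD_le_max (le_trans m0 mx) xy; have := gap x mx; lra.
have := powRD_le_max (le_trans m0 my) (ltW yx).
by rewrite addrC; have := gap y my; lra.
Qed.

Lemma normD_powR_gap u v m : 0 <= m -> m <= `|u| -> m <= `|v| ->
  `|u + v| `^ p + (1 - p) * m `^ p <= `|u| `^ p + `|v| `^ p.
Proof.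
move=> m0 mu mv; apply: le_trans (powRD_gap m0 mu mv); rewrite lerD2r.
by rewrite powR_ler ?ler_normD // ltW.
Qed.

Lemma normD_powR_le u v : `|u + v| `^ p <= `|u| `^ p + `|v| `^ p.
Proof.
by have := normD_powR_gap (lexx 0) (normr_ge0 u) (normr_ge0 v); rewrite powR0p mulr0 addr0.
Qed.

End PowR.

Section PNorm.
Variables (R : realType) (p : R) (V : lmodType R) (nrm : V -> R).
Hypotheses (p_gt0 : 0 < p) (nrm_pnorm : is_pnorm p nrm).

Lemma pnorm_ge0 v : 0 <= nrm v.
Proof. by case: nrm_pnorm. Qed.

Lemma pnorm0 : nrm 0 = 0.
Proof. by case: nrm_pnorm => _ [/(_ 0) [_ ->]]. Qed.

Lemma pnormZ_powR k v : nrm (k *: v) `^ p = `|k| `^ p * nrm v `^ p.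
Proof. by case: nrm_pnorm => _ [_ [-> _]]; rewrite powRM ?pnorm_ge0. Qed.

Lemma pnorm_sum_powR_le (I : eqType) (r : seq I) (a : I -> R) (v : I -> V) (B : I -> R) :
  {in r, forall i, nrm (v i) <= B i} ->
  nrm (\sum_(i <- r) a i *: v i) `^ p <= \sum_(i <- r) `|a i| `^ p * B i `^ p.
Proof.
move=> vB; rewrite big_seq_cond [X in _ <= X]big_seq_cond.
apply: (big_ind2 (fun w b => nrm w `^ p <= b)).
- by rewrite pnorm0 powR0p.
- move=> w1 b1 w2 b2 wb1 wb2; case: nrm_pnorm => _ [_ [_ nrmD]].
  exact: le_trans (nrmD _ _) (lerD wb1 wb2).
- move=> i /andP[i_r _]; rewrite pnormZ_powR ler_wpM2l ?powR_ge0 //.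
  by rewrite powR_ler ?pnorm_ge0 ?vB // ltW.
Qed.

End PNorm.

Section FreePnormValues.
Variables (R : realType) (p : R) (T : eqType) (d : T -> T -> R) (S : set T) (o : T).

Definition free_pnorm_values (mol : seq (R * T)) : set R :=
  [set r | exists (V : lmodType R) (nrm : V -> R) (f : T -> V),
     [/\ is_pnorm p nrm, pn_complete nrm, f o = 0,
         (forall u v, S u -> S v -> nrm (f u - f v) <= d u v) &
         r = nrm (\sum_(c <- mol) c.1 *: f c.2)]].

Lemma free_pnorm_le mol r B : free_pnorm_values mol r ->
  ubound (free_pnorm_values mol) B -> free_pnorm p d S o mol <= B.
Proof. by move=> r_val B_ub; apply: ge_sup => //; exists r. Qed.

Lemma free_pnorm_ge mol r B : free_pnorm_values mol r ->
  ubound (free_pnorm_values mol) B -> r <= free_pnorm p d S o mol.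
Proof. by move=> r_val B_ub; apply: ub_le_sup => //; exists B. Qed.

(* An element (c, u, v) of dip stands for the dipole c (delta(u) - delta(v)). *)
Lemma free_pnorm_values_ub mol (dip : seq (R * T * T)) B : 0 < p ->
  (forall (V : lmodType R) (f : T -> V), f o = 0 ->
     \sum_(c <- mol) c.1 *: f c.2 = \sum_(e <- dip) e.1.1 *: (f e.1.2 - f e.2)) ->
  (forall e, e \in dip -> S e.1.2 /\ S e.2) ->
  \sum_(e <- dip) `|e.1.1| `^ p * d e.1.2 e.2 `^ p <= B ->
  ubound (free_pnorm_values mol) (B `^ p^-1).
Proof.
move=> p_gt0 mol_dip dip_S dip_B _ [V [nrm [f [nrm_p _ fo f_lip ->]]]].
rewrite mol_dip //; apply: powR_le_powRV; rewrite ?(pnorm_ge0 nrm_p) //.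
apply: le_trans dip_B.
apply: (@pnorm_sum_powR_le _ _ _ _ p_gt0 nrm_p _ _ _ _ (fun e => d e.1.2 e.2)).
by move=> e /dip_S[]; apply: f_lip.
Qed.

End FreePnormValues.

Lemma real_complete (R : realType) (u : nat -> R) :
  (forall e : R, 0 < e -> exists N, forall m n, (N <= m)%N -> (N <= n)%N -> `|u m - u n| < e) ->
  exists l : R, forall e : R, 0 < e -> exists N, forall n, (N <= n)%N -> `|u n - l| < e.
Proof.
move=> u_cauchy.
have : cvg (u @ \oo).
  apply/cauchy_cvgP/cauchy_ballP => e e_gt0.
  have [N HN] := u_cauchy e e_gt0.
  exists (u @` [set n | (N <= n)%N], u @` [set n | (N <= n)%N]).
    by split; exists N => // n Hn; exists n.
  by case=> _ _ /= [[m Hm <-] [n Hn <-]]; rewrite /ball /= distrC; apply: HN.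
move=> /cvgrPdist_lt u_cvg; exists (lim (u @ \oo)) => e e_gt0.
have [N _ HN] := u_cvg e e_gt0.
by exists N => n Hn; rewrite distrC; apply: HN.
Qed.

Section RowGauge.
Variables (R : realType) (p : R) (n : nat) (phi : 'rV[R]_n -> R) (c C : R).
Hypotheses (p_gt0 : 0 < p) (c_gt0 : 0 < c) (C_ge0 : 0 <= C).
Implicit Types u v : 'rV[R]_n.
Hypothesis phi_ge0 : forall v, 0 <= phi v.
Hypothesis phiZ : forall k v, phi (k *: v) = `|k| `^ p * phi v.
Hypothesis phiD : forall u v, phi (u + v) <= phi u + phi v.
Hypothesis phi_lb : forall v i, c * `|v ord0 i| `^ p <= phi v.
Hypothesis phi_ub : forall v, phi v <= C * \sum_i `|v ord0 i| `^ p.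

Definition gauge_norm v := phi v `^ p^-1.

Lemma gauge_norm_powR v : gauge_norm v `^ p = phi v.
Proof. exact: powRVK. Qed.

Lemma coord_le_gauge_norm v i : c `^ p^-1 * `|v ord0 i| <= gauge_norm v.
Proof.
rewrite -[`|_|](powRK p_gt0) // -powRM ?(ltW c_gt0) ?powR_ge0 //.
by apply: powR_ler; rewrite ?invr_ge0 ?mulr_ge0 ?powR_ge0 ?phi_lb // ltW.
Qed.

Lemma gauge_norm_pnorm : is_pnorm p gauge_norm.
Proof.
have phi0 : phi 0 = 0 by rewrite -(scale0r 0) phiZ normr0 powR0p // mul0r.
split; first by move=> v; apply: powR_ge0.
split.
  move=> v; split => [/powR_eq0_eq0 phi_v0|->]; last by rewrite /gauge_norm phi0 powR0p ?invr_gt0.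
  apply/rowP => i; rewrite mxE; apply/normr0_eq0/powR_eq0_eq0/eqP.
  rewrite eq_le powR_ge0 andbT -(ler_pM2l c_gt0) mulr0 -phi_v0; exact: phi_lb.
split; first by move=> k v; rewrite /gauge_norm phiZ powRM ?powR_ge0 // powRK.
by move=> u v; rewrite !gauge_norm_powR.
Qed.

Lemma gauge_norm_complete : pn_complete gauge_norm.
Proof.
move=> s s_cauchy.
have cp_gt0 : 0 < c `^ p^-1 by rewrite powR_gt0.
have coord_cauchy i : exists l : R, forall e, 0 < e ->
    exists N, forall k, (N <= k)%N -> `|s k ord0 i - l| < e.
  apply: real_complete => e e_gt0.
  have [N HN] := s_cauchy _ (mulr_gt0 cp_gt0 e_gt0).
  exists N => k m k_ge m_ge; rewrite -(ltr_pM2l cp_gt0).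
  apply: le_lt_trans (HN k m k_ge m_ge).
  by have := coord_le_gauge_norm (s k - s m) i; rewrite !mxE.
have [l l_lim] := choice coord_cauchy.
exists (\row_i l i) => e e_gt0.
pose E := e `^ p / (C * n%:R + 1).
have E_gt0 : 0 < E by rewrite divr_gt0 ?powR_gt0 // ltr_wpDl ?mulr_ge0.
have [N HN] := choice (fun i => l_lim i _ (powR_gt0 p^-1 E_gt0)).
exists (\max_i N i)%N => k k_ge.
have coord_small i : `|(s k - \row_i l i) ord0 i| `^ p <= E.
  rewrite -(powRVK p_gt0 (ltW E_gt0)) !mxE powR_ler ?(ltW p_gt0) //.
  by apply/ltW/HN; apply: leq_trans k_ge; apply: leq_bigmax.
have : phi (s k - \row_i l i) < e `^ p.
  apply: le_lt_trans (phi_ub _) _.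
  apply: (@le_lt_trans _ _ (C * (n%:R * E))).
    rewrite ler_wpM2l // mulr_natl -[n in _ *+ n]card_ord -sumr_const.
    by apply: ler_sum => i _; apply: coord_small.
  rewrite /E !mulrA ltr_pdivrMr ?ltr_wpDl ?mulr_ge0 //.
  by rewrite mulrDr mulr1 [_ * e `^ p]mulrC ltrDl powR_gt0.
by move=> phi_lt; rewrite -[e](powRK p_gt0) ?(ltW e_gt0) // powR_ltr ?invr_gt0 ?powR_ge0.
Qed.

Lemma gauge_free_pnorm_value (T : eqType) (d : T -> T -> R) (S : set T) (o : T)
    (mol : seq (R * T)) (f : T -> 'rV[R]_n) :
  f o = 0 -> (forall u v : T, S u -> S v -> 0 <= d u v) ->
  (forall u v : T, S u -> S v -> phi (f u - f v) <= d u v `^ p) ->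
  free_pnorm_values p d S o mol (gauge_norm (\sum_(m <- mol) m.1 *: f m.2)).
Proof.
move=> fo d_ge0 f_lip; exists 'rV[R]_n, gauge_norm, f; split => //.
- exact: gauge_norm_pnorm.
- exact: gauge_norm_complete.
- move=> u v Su Sv; rewrite -(powRK p_gt0 (d_ge0 _ _ Su Sv)).
  by rewrite powR_ler ?powR_ge0 ?f_lip // invr_ge0 ltW.
Qed.

End RowGauge.

Section CutEmbedding.
Variables (R : realType) (p : R) (n : nat).
Hypotheses (p_gt0 : 0 < p) (p_lt1 : p < 1).
Implicit Types u v : 'rV[R]_n.

Definition lp_gauge v : R := \sum_i `|v ord0 i| `^ p.

Lemma lp_gauge_ge0 v : 0 <= lp_gauge v.
Proof. by apply: sumr_ge0 => i _; apply: powR_ge0. Qed.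

Lemma lp_gaugeZ k v : lp_gauge (k *: v) = `|k| `^ p * lp_gauge v.
Proof. by rewrite mulr_sumr; apply: eq_bigr => i _; rewrite mxE normrM powRM. Qed.

Lemma lp_gaugeD u v : lp_gauge (u + v) <= lp_gauge u + lp_gauge v.
Proof.
by rewrite -big_split; apply: ler_sum => i _; rewrite mxE normD_powR_le.
Qed.

Lemma lp_gauge_lb v i : 1 * `|v ord0 i| `^ p <= lp_gauge v.
Proof.
rewrite mul1r /lp_gauge (bigD1 i) //= lerDl.
by apply: sumr_ge0 => j _; apply: powR_ge0.
Qed.

Variables (T : eqType) (w : 'I_n -> R) (cut : 'I_n -> T -> bool).
Hypothesis w_ge0 : forall k, 0 <= w k.

Definition cut_embedding (t : T) : 'rV[R]_n := \row_k (w k `^ p^-1 * (cut k t)%:R).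

Lemma lp_gauge_cut_embeddingB t t' :
  lp_gauge (cut_embedding t - cut_embedding t') = \sum_(k | cut k t != cut k t') w k.
Proof.
rewrite /lp_gauge [RHS]big_mkcond; apply: eq_bigr => k _.
rewrite !mxE -mulrBr normrM powRM // ger0_norm ?powR_ge0 // powRVK //.
case: (cut k t); case: (cut k t');
  by rewrite /= ?subrr ?subr0 ?sub0r ?normrN ?normr1 ?normr0 ?powR1 ?powR0p ?mulr1 ?mulr0.
Qed.

Lemma lp_gauge_cut_molecule (mol : seq (R * T)) :
  lp_gauge (\sum_(m <- mol) m.1 *: cut_embedding m.2) =
  \sum_k w k * `|\sum_(m <- mol) m.1 * (cut k m.2)%:R| `^ p.
Proof.
apply: eq_bigr => k _; rewrite summxE.
under eq_bigr => m _ do rewrite !mxE mulrCA.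
by rewrite -mulr_sumr normrM powRM // ger0_norm ?powR_ge0 // powRVK.
Qed.

Lemma cut_free_pnorm_value (d : T -> T -> R) (S : set T) (o : T) (mol : seq (R * T)) :
  (forall k, cut k o = false) -> (forall t t', S t -> S t' -> 0 <= d t t') ->
  (forall t t', S t -> S t' -> \sum_(k | cut k t != cut k t') w k <= d t t' `^ p) ->
  free_pnorm_values p d S o mol
    ((\sum_k w k * `|\sum_(m <- mol) m.1 * (cut k m.2)%:R| `^ p) `^ p^-1).
Proof.
move=> cut_o d_ge0 cut_le; rewrite -lp_gauge_cut_molecule.
apply: (@gauge_free_pnorm_value _ _ _ lp_gauge 1 1) => //.
- exact: lp_gauge_ge0.
- exact: lp_gaugeZ.
- exact: lp_gaugeD.
- exact: lp_gauge_lb.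
- by move=> v; rewrite mul1r.
- by apply/rowP => k; rewrite !mxE cut_o mulr0.
- by move=> t t' St St'; rewrite lp_gauge_cut_embeddingB cut_le.
Qed.

End CutEmbedding.

Definition tripod_value (R : realType) (p Lx Ly L0 a b : R) : R :=
  `|a| `^ p * Lx + `|b| `^ p * Ly + `|a + b| `^ p * L0.

Section TripodGauge.
Variables (R : realType) (p Lx Ly L0 : R).
Hypotheses (p_gt0 : 0 < p) (p_lt1 : p < 1).
Hypotheses (Lx_gt0 : 0 < Lx) (Ly_gt0 : 0 < Ly) (L0_gt0 : 0 < L0).
Implicit Types (a b t : R) (u v : 'rV[R]_2).

(* The p-cost of a delta(x) + b delta(y) = (a - t) (delta(x) - delta(o))
   + (b + t) (delta(y) - delta(o)) + t (delta(x) - delta(y)) in a three-point space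
   {o, x, y} with d(x,o)^p = Lx + L0, d(y,o)^p = Ly + L0 and d(x,y)^p = Lx + Ly. *)
Definition tripod_cost a b t : R :=
  `|a - t| `^ p * (Lx + L0) + `|b + t| `^ p * (Ly + L0) + `|t| `^ p * (Lx + Ly).

Definition tripod_gauge v : R := inf (range (tripod_cost (v ord0 ord0) (v ord0 ord_max))).

Lemma tripod_cost_ge0 a b t : 0 <= tripod_cost a b t.
Proof. by rewrite !addr_ge0 // mulr_ge0 ?powR_ge0 // addr_ge0 // ltW. Qed.

Lemma tripod_gauge_le v t : tripod_gauge v <= tripod_cost (v ord0 ord0) (v ord0 ord_max) t.
Proof.
by apply: ge_inf; [exists 0 => _ [s _ <-]; apply: tripod_cost_ge0 | exists t].
Qed.

Lemma tripod_gauge_ge v m :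
  (forall t, m <= tripod_cost (v ord0 ord0) (v ord0 ord_max) t) -> m <= tripod_gauge v.
Proof.
move=> m_le; apply: lb_le_inf => [|_ [t _ <-] //].
by exists (tripod_cost (v ord0 ord0) (v ord0 ord_max) 0), 0.
Qed.

Lemma tripod_gauge_ge0 v : 0 <= tripod_gauge v.
Proof. by apply: tripod_gauge_ge => t; apply: tripod_cost_ge0. Qed.

Lemma tripod_costZ k a b t : tripod_cost (k * a) (k * b) (k * t) = `|k| `^ p * tripod_cost a b t.
Proof. by rewrite /tripod_cost -mulrBr -mulrDr !normrM !powRM //; ring. Qed.

Lemma tripod_gaugeZ k v : tripod_gauge (k *: v) = `|k| `^ p * tripod_gauge v.
Proof.
have [->|k_neq0] := eqVneq k 0.
  rewrite scale0r normr0 powR0p // mul0r; apply/le_anti; rewrite tripod_gauge_ge0 andbT.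
  apply: le_trans (tripod_gauge_le _ 0) _.
  by rewrite !mxE /tripod_cost subr0 addr0 normr0 powR0p // !mul0r !addr0.
have kp_gt0 : 0 < `|k| `^ p by rewrite powR_gt0 ?normr_gt0.
apply/le_anti/andP; split.
  rewrite mulrC -ler_pdivrMr //; apply: tripod_gauge_ge => t.
  rewrite ler_pdivrMr // mulrC -tripod_costZ.
  by have := tripod_gauge_le (k *: v) (k * t); rewrite !mxE.
apply: tripod_gauge_ge => s; rewrite !mxE.
have -> : s = k * (s / k) by rewrite mulrCA divff // mulr1.
by rewrite tripod_costZ ler_wpM2l ?(ltW kp_gt0) ?tripod_gauge_le.
Qed.

Lemma tripod_costD a b t a' b' t' :
  tripod_cost (a + a') (b + b') (t + t') <= tripod_cost a b t + tripod_cost a' b' t'.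
Proof.
rewrite /tripod_cost.
have -> : a + a' - (t + t') = (a - t) + (a' - t') by ring.
have -> : b + b' + (t + t') = (b + t) + (b' + t') by ring.
have Lxy := ltW (addr_gt0 Lx_gt0 Ly_gt0); have Lx0 := ltW (addr_gt0 Lx_gt0 L0_gt0).
have Ly0 := ltW (addr_gt0 Ly_gt0 L0_gt0).
have := ler_wpM2r Lx0 (normD_powR_le p_gt0 p_lt1 (a - t) (a' - t')).
have := ler_wpM2r Ly0 (normD_powR_le p_gt0 p_lt1 (b + t) (b' + t')).
have := ler_wpM2r Lxy (normD_powR_le p_gt0 p_lt1 t t').
rewrite !mulrDl; lra.
Qed.

Lemma tripod_gaugeD u v : tripod_gauge (u + v) <= tripod_gauge u + tripod_gauge v.
Proof.
have step s : tripod_gauge (u + v) - tripod_cost (v ord0 ord0) (v ord0 ord_max) s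
    <= tripod_gauge u.
  apply: tripod_gauge_ge => t; have := tripod_gauge_le (u + v) (t + s).
  by rewrite !mxE; have := tripod_costD (u ord0 ord0) (u ord0 ord_max) t
    (v ord0 ord0) (v ord0 ord_max) s; lra.
suff : tripod_gauge (u + v) - tripod_gauge u <= tripod_gauge v by lra.
by apply: tripod_gauge_ge => s; have := step s; lra.
Qed.

Lemma tripod_gauge_lb v i : Num.min Lx Ly * `|v ord0 i| `^ p <= tripod_gauge v.
Proof.
apply: tripod_gauge_ge => t; rewrite /tripod_cost.
set m := Num.min Lx Ly; set A := `|_ - t| `^ p; set B := `|_ + t| `^ p.
have [mx my] : m <= Lx /\ m <= Ly by rewrite !ge_min !lexx orbT.
have m_ge0 : 0 <= m by rewrite le_min !ltW.
have [A0 B0 C0] : [/\ 0 <= A, 0 <= B & 0 <= `|t| `^ p] by rewrite !powR_ge0.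
have := mulr_ge0 A0 (ltW L0_gt0); have := mulr_ge0 B0 (ltW L0_gt0).
have := ler_wpM2r A0 mx; have := ler_wpM2r B0 my.
have := ler_wpM2r C0 mx; have := ler_wpM2r C0 my.
have := mulr_ge0 A0 (ltW Lx_gt0); have := mulr_ge0 B0 (ltW Ly_gt0).
have := mulr_ge0 C0 (ltW Lx_gt0); have := mulr_ge0 C0 (ltW Ly_gt0).
have [-> | ->] : i = ord0 \/ i = ord_max.
  by case: i => -[|[|]] // ?; [left | right]; apply/val_inj.
  have := normD_powR_le p_gt0 p_lt1 (v ord0 ord0 - t) t; rewrite subrK -/A.
  by move/(ler_wpM2l m_ge0); lra.
have := normD_powR_le p_gt0 p_lt1 (v ord0 ord_max + t) (- t); rewrite addrK normrN -/B.
by move/(ler_wpM2l m_ge0); lra.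
Qed.

Lemma tripod_gauge_ub v : tripod_gauge v <= (Lx + Ly + L0) * \sum_i `|v ord0 i| `^ p.
Proof.
apply: le_trans (tripod_gauge_le _ 0) _.
rewrite /tripod_cost big_ord_recr big_ord1 /= subr0 addr0 normr0 powR0p // mul0r addr0.
have -> : widen_ord (leqnSn 1) ord0 = ord0 :> 'I_2 by apply/val_inj.
have := mulr_ge0 (powR_ge0 `|v ord0 ord0| p) (ltW Ly_gt0).
have := mulr_ge0 (powR_ge0 `|v ord0 ord_max| p) (ltW Lx_gt0).
lra.
Qed.

Lemma tripod_cost_gap a b t mu : 0 <= mu ->
  2 * mu <= `|a| -> 2 * mu <= `|b| -> 2 * mu <= `|a + b| ->
  tripod_value p Lx Ly L0 a b + Num.min Lx (Num.min Ly L0) * ((1 - p) * mu `^ p)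
    <= tripod_cost a b t.
Proof.
move=> mu_ge0 mu_a mu_b mu_ab.
set e := (1 - p) * mu `^ p; set m := Num.min Lx _.
have m_ge0 : 0 <= m by rewrite !le_min !ltW.
have e_ge0 : 0 <= e by rewrite mulr_ge0 ?powR_ge0 // subr_ge0 ltW.
have [mx my m0] : [/\ m <= Lx, m <= Ly & m <= L0] by rewrite !ge_min !lexx !orbT.
have defect_ge0 (r s : R) : 0 <= `|r| `^ p + `|s| `^ p - `|r + s| `^ p.
  by rewrite subr_ge0 (normD_powR_le p_gt0 p_lt1).
have defect_gap (r s : R) : mu <= `|r| -> mu <= `|s| ->
    e <= `|r| `^ p + `|s| `^ p - `|r + s| `^ p.
  by move=> mu_r mu_s; have := normD_powR_gap p_gt0 p_lt1 mu_ge0 mu_r mu_s; rewrite -/e; lra.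
have abt : a - t + (b + t) = a + b by ring.
set Dx := `|a - t| `^ p + `|t| `^ p - `|a| `^ p.
set Dy := `|b + t| `^ p + `|t| `^ p - `|b| `^ p.
set D0 := `|a - t| `^ p + `|b + t| `^ p - `|a + b| `^ p.
have Dx_ge0 : 0 <= Dx by have := defect_ge0 (a - t) t; rewrite subrK.
have Dy_ge0 : 0 <= Dy by have := defect_ge0 (b + t) (- t); rewrite addrK normrN.
have D0_ge0 : 0 <= D0 by have := defect_ge0 (a - t) (b + t); rewrite abt.
have -> : tripod_cost a b t = tripod_value p Lx Ly L0 a b + (Lx * Dx + Ly * Dy + L0 * D0).
  by rewrite /tripod_cost /tripod_value /Dx /Dy /D0; ring.
rewrite lerD2l.
have LD_ge0 L D : m <= L -> 0 <= D -> 0 <= L * D.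
  by move=> mL D_ge0; rewrite mulr_ge0 // (le_trans m_ge0).
have LD_gap L D : m <= L -> e <= D -> m * e <= L * D by apply: ler_pM.
have := LD_ge0 _ _ mx Dx_ge0; have := LD_ge0 _ _ my Dy_ge0; have := LD_ge0 _ _ m0 D0_ge0.
have norm_a := ler_normD (a - t) t; have norm_b := ler_normD (b + t) (- t).
have norm_ab := ler_normD (a - t) (b + t).
rewrite subrK addrK normrN abt in norm_a norm_b norm_ab.
have [t_small|t_large] := ltP `|t| mu.
  have gap0 : e <= D0 by have := defect_gap (a - t) (b + t); rewrite abt; apply; lra.
  by have := LD_gap _ _ m0 gap0; lra.
have [a_large|a_small] := leP mu `|a - t|.
  have gapx : e <= Dx by have := defect_gap (a - t) t a_large t_large; rewrite subrK.
  by have := LD_gap _ _ mx gapx; lra.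
have gapy : e <= Dy by have := defect_gap (b + t) (- t); rewrite addrK normrN; apply; lra.
by have := LD_gap _ _ my gapy; lra.
Qed.

Lemma tripod_value_lt_gauge v : v ord0 ord0 != 0 -> v ord0 ord_max != 0 ->
  v ord0 ord0 + v ord0 ord_max != 0 ->
  tripod_value p Lx Ly L0 (v ord0 ord0) (v ord0 ord_max) < tripod_gauge v.
Proof.
set a := v ord0 ord0; set b := v ord0 ord_max => a_neq0 b_neq0 ab_neq0.
pose mu := Num.min `|a| (Num.min `|b| `|a + b|) / 2.
have mu_gt0 : 0 < mu by rewrite divr_gt0 // !lt_min !normr_gt0 a_neq0 b_neq0 ab_neq0.
have mu_le : [/\ 2 * mu <= `|a|, 2 * mu <= `|b| & 2 * mu <= `|a + b|].
  by rewrite /mu mulrC divfK ?pnatr_eq0 // !ge_min !lexx !orbT.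
have gap_gt0 : 0 < Num.min Lx (Num.min Ly L0) * ((1 - p) * mu `^ p).
  by rewrite !mulr_gt0 ?powR_gt0 ?subr_gt0 // !lt_min Lx_gt0 Ly_gt0 L0_gt0.
case: mu_le => mu_a mu_b mu_ab.
have gap t := @tripod_cost_gap a b t mu (ltW mu_gt0) mu_a mu_b mu_ab.
by apply: lt_le_trans (tripod_gauge_ge gap); rewrite ltrDl.
Qed.

End TripodGauge.

Lemma star_pmetric (R : realType) (p : R) (T : eqType) (dd : T -> T -> R) (leg : T -> R) :
  0 < p -> (forall u v, 0 <= dd u v) ->
  (forall u v, dd u v `^ p = if u == v then 0 else leg u + leg v) ->
  (forall u, 0 <= leg u) -> (forall u v, u != v -> 0 < leg u + leg v) ->
  is_pmetric p dd.
Proof.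
move=> p_gt0 dd_ge0 ddE leg_ge0 leg_gt0.
have dd_sym u v : dd u v = dd v u.
  rewrite -(powRK p_gt0 (dd_ge0 u v)) -(powRK p_gt0 (dd_ge0 v u)) !ddE eq_sym.
  by case: eqP => // _; rewrite addrC.
split => //; split.
  move=> u v; split => [dd0|->]; last by apply: (@powR_eq0_eq0 _ _ p); rewrite ddE eqxx.
  apply/eqP/negPn/negP => /[dup] /leg_gt0 + /negbTE uv.
  by have := ddE u v; rewrite dd0 powR0p // uv => <-; rewrite ltxx.
split => // u v w; rewrite !ddE.
have [<-|uv] := eqVneq u v; first by rewrite add0r.
have [<-|vw] := eqVneq v w; first by rewrite (negbTE uv) addr0.
by have := leg_ge0 u; have := leg_ge0 v; have := leg_ge0 w; case: (u == w); lra.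
Qed.

Section GromovProduct.
Variables (R : realType) (p : R) (T : Type) (d : T -> T -> R).

Definition gromov_powR (u1 u2 u3 : T) : R :=
  (d u2 u1 `^ p + d u3 u1 `^ p - d u2 u3 `^ p) / 2.

Lemma gromov_extE u1 u2 u3 : gromov_ext p d u1 u2 u3 = gromov_powR u1 u2 u3 `^ p^-1.
Proof. by []. Qed.

Lemma gromov_powR_gt0 u v w : d v w `^ p < d v u `^ p + d w u `^ p -> 0 < gromov_powR u v w.
Proof. by move=> lt_vw; rewrite divr_gt0 // subr_gt0. Qed.

Hypothesis d_sym : forall u v, d u v = d v u.

Lemma gromov_powRC u v w : gromov_powR u v w = gromov_powR u w v.
Proof. by rewrite /gromov_powR (d_sym v w) [d v u `^ p + _]addrC. Qed.

Lemma gromov_powR_add u v w : gromov_powR u v w + gromov_powR v u w = d u v `^ p.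
Proof. rewrite /gromov_powR (d_sym v u) (d_sym w u) (d_sym w v); lra. Qed.

End GromovProduct.

Lemma tripod_split_exists (R : realType) (Lx Ly L0 A B G : R) :
  0 <= Lx -> 0 <= Ly -> 0 <= L0 -> 0 <= A -> 0 <= B -> 0 <= G ->
  Lx + Ly <= A + B -> Lx + L0 <= A + G -> Ly + L0 <= B + G ->
  exists sx sy s0, [/\ 0 <= sx <= Lx, 0 <= sy <= Ly, 0 <= s0 <= L0 &
    [/\ sx + sy + s0 <= G, Lx - sx + sy + (L0 - s0) <= A
      & sx + (Ly - sy) + (L0 - s0) <= B]].
Proof.
move=> *.
have [A_lt|A_ge] := ltP A Lx.
  by exists (Lx - A), 0, L0; split; [apply/andP; split; lra.. | split; lra].
have [B_lt|B_ge] := ltP B Ly.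
  by exists 0, (Ly - B), L0; split; [apply/andP; split; lra.. | split; lra].
have [Ax0|Ax_gt0] := leP (Lx + L0 - A) 0; have [By0|By_gt0] := leP (Ly + L0 - B) 0.
- by exists 0, 0, 0; split; [apply/andP; split; lra.. | split; lra].
- by exists 0, 0, (Ly + L0 - B); split; [apply/andP; split; lra.. | split; lra].
- by exists 0, 0, (Lx + L0 - A); split; [apply/andP; split; lra.. | split; lra].
have [le_AB|le_BA] := leP (Lx + L0 - A) (Ly + L0 - B).
  by exists 0, 0, (Ly + L0 - B); split; [apply/andP; split; lra.. | split; lra].
by exists 0, 0, (Lx + L0 - A); split; [apply/andP; split; lra.. | split; lra].
Qed.

Section Tripod.
Variables (R : realType) (p : R) (T : eqType) (d : T -> T -> R) (o x y z : T).
Hypotheses (p_gt0 : 0 < p) (p_lt1 : p < 1).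
Hypotheses (hox : o != x) (hoy : o != y) (hoz : o != z).
Hypotheses (hxy : x != y) (hxz : x != z) (hyz : y != z).
Hypothesis cover : forall w : T, w = o \/ w = x \/ w = y \/ w = z.
Hypothesis d_pmetric : is_pmetric p d.
Hypothesis d_xy_lt : d x y `^ p < d x o `^ p + d o y `^ p.
Hypothesis d_ox_lt : d o x `^ p < d o y `^ p + d y x `^ p.
Hypothesis d_oy_lt : d o y `^ p < d o x `^ p + d x y `^ p.

Local Notation Lx := (gromov_powR p d x o y).
Local Notation Ly := (gromov_powR p d y o x).
Local Notation L0 := (gromov_powR p d o x y).
Local Notation d' := (dprime p d o x y z).
Local Notation F := (tripod_value p Lx Ly L0).
Local Notation N := [set o; x; y].

Let d_ge0 : forall u v, 0 <= d u v := d_pmetric.1.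
Let d_sym : forall u v, d u v = d v u := d_pmetric.2.2.1.
Let d_refl u : d u u = 0 := (d_pmetric.2.1 u u).2 erefl.
Let d_tri : forall u v w, d u w `^ p <= d u v `^ p + d v w `^ p := d_pmetric.2.2.2.

Let neq := (negbTE hox, negbTE hoy, negbTE hoz, negbTE hxy, negbTE hxz, negbTE hyz,
  etrans (eq_sym x o) (negbTE hox), etrans (eq_sym y o) (negbTE hoy),
  etrans (eq_sym z o) (negbTE hoz), etrans (eq_sym y x) (negbTE hxy),
  etrans (eq_sym z x) (negbTE hxz), etrans (eq_sym z y) (negbTE hyz)).

Lemma Lx_gt0 : 0 < Lx.
Proof. by apply: gromov_powR_gt0; rewrite (d_sym y x). Qed.

Lemma Ly_gt0 : 0 < Ly.
Proof. by apply: gromov_powR_gt0; rewrite (d_sym x y). Qed.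

Lemma L0_gt0 : 0 < L0.
Proof. by apply: gromov_powR_gt0; rewrite (d_sym y o). Qed.

Lemma d_xo_powR : d x o `^ p = Lx + L0.
Proof. by rewrite gromov_powR_add. Qed.

Lemma d_yo_powR : d y o `^ p = Ly + L0.
Proof. by rewrite (gromov_powRC p d_sym o x) gromov_powR_add. Qed.

Lemma d_xy_powR : d x y `^ p = Lx + Ly.
Proof. by rewrite (gromov_powRC p d_sym x o) (gromov_powRC p d_sym y o) gromov_powR_add. Qed.

Definition tripod_leg (u : T) : R :=
  if u == o then L0 else if u == x then Lx else if u == y then Ly else 0.

Lemma dprime_powR u v : d' u v `^ p = if u == v then 0 else tripod_leg u + tripod_leg v.
Proof.
have Lx0 := ltW Lx_gt0; have Ly0 := ltW Ly_gt0; have L00 := ltW L0_gt0.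
case: (cover u) => [|[|[|]]] ->; case: (cover v) => [|[|[|]]] ->;
  rewrite /dprime /dz /tripod_leg ?eqxx ?neq ?gromov_extE ?powRVK //
    ?d_refl ?powR0p // ?(d_sym o x) ?(d_sym o y) ?(d_sym y x);
  rewrite ?d_xo_powR ?d_yo_powR ?d_xy_powR; lra.
Qed.

Lemma dprime_pmetric : is_pmetric p d'.
Proof.
have Lx0 := Lx_gt0; have Ly0 := Ly_gt0; have L00 := L0_gt0.
apply: (star_pmetric p_gt0 _ dprime_powR).
- by move=> u v; rewrite /dprime /dz; repeat case: ifP => _; rewrite ?powR_ge0 ?d_ge0.
- by move=> u; rewrite /tripod_leg; repeat case: ifP => _; lra.
by move=> u v; case: (cover u) => [|[|[|]]] ->; case: (cover v) => [|[|[|]]] ->;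
  rewrite /tripod_leg ?eqxx ?neq //= => _; lra.
Qed.

(* For any sx, sy, s0
   the weights Lx - sx, sx, Ly - sy, sy, L0 - s0, s0 induce d^p on N; only the
   distances from z depend on the split, and sx = sy = 0, s0 = L0 gives d'^p. *)
Definition tripod_cut (k : 'I_6) (u : T) : bool :=
  nth false [:: u == x; (u == x) || (u == z); u == y; (u == y) || (u == z);
                (u != o) && (u != z); u != o] k.

Definition tripod_weight (sx sy s0 : R) (k : 'I_6) : R :=
  nth 0 [:: Lx - sx; sx; Ly - sy; sy; L0 - s0; s0] k.

Lemma big_ord6 (V : nmodType) (F : 'I_6 -> V) :
  \sum_(k < 6) F k = F (@Ordinal 6 0 isT) + F (@Ordinal 6 1 isT) + F (@Ordinal 6 2 isT)
    + F (@Ordinal 6 3 isT) + F (@Ordinal 6 4 isT) + F (@Ordinal 6 5 isT).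
Proof.
rewrite !big_ord_recl big_ord0 addr0 !addrA.
by congr (F _ + F _ + F _ + F _ + F _ + F _); apply: val_inj.
Qed.

Section CutWitness.
Variables (dd : T -> T -> R) (sx sy s0 : R).
Hypotheses (sx_box : 0 <= sx <= Lx) (sy_box : 0 <= sy <= Ly) (s0_box : 0 <= s0 <= L0).
Hypothesis dd_pmetric : is_pmetric p dd.
Hypotheses (dd_xo : dd x o `^ p = Lx + L0) (dd_yo : dd y o `^ p = Ly + L0).
Hypothesis dd_xy : dd x y `^ p = Lx + Ly.
Hypothesis dd_zo : sx + sy + s0 <= dd z o `^ p.
Hypothesis dd_zx : Lx - sx + sy + (L0 - s0) <= dd z x `^ p.
Hypothesis dd_zy : sx + (Ly - sy) + (L0 - s0) <= dd z y `^ p.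

Lemma tripod_cut_lipschitz u v :
  \sum_(k < 6 | tripod_cut k u != tripod_cut k v) tripod_weight sx sy s0 k <= dd u v `^ p.
Proof.
have dd_sym : forall u v, dd u v = dd v u := dd_pmetric.2.2.1.
have dd_refl u' : dd u' u' = 0 := (dd_pmetric.2.1 u' u').2 erefl.
case: (cover u) => [|[|[|]]] ->; case: (cover v) => [|[|[|]]] ->;
  rewrite big_mkcond big_ord6 /tripod_cut /tripod_weight /= ?eqxx ?neq /=;
  rewrite ?dd_refl ?powR0p // ?(dd_sym o x) ?(dd_sym o y) ?(dd_sym y x) ?(dd_sym o z)
    ?(dd_sym x z) ?(dd_sym y z) ?dd_xo ?dd_yo ?dd_xy; move: dd_zo dd_zx dd_zy; lra.
Qed.

Lemma tripod_cut_free_pnorm_value (S : set T) a b :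
  free_pnorm_values p dd S o [:: (a, x); (b, y)] (F a b `^ p^-1).
Proof.
have -> : F a b = \sum_k tripod_weight sx sy s0 k *
    `|\sum_(m <- [:: (a, x); (b, y)]) m.1 * (tripod_cut k m.2)%:R| `^ p.
  rewrite big_ord6 !big_cons !big_nil /tripod_cut /tripod_weight /= !eqxx !neq /=.
  rewrite !mulr1 !mulr0 !addr0 !add0r /tripod_value; lra.
apply: cut_free_pnorm_value => //.
- move: sx_box sy_box s0_box => /andP[? ?] /andP[? ?] /andP[? ?].
  by move=> [[|[|[|[|[|[|k]]]]]] hk] //; rewrite /tripod_weight /=; lra.
- by move=> [[|[|[|[|[|[|k]]]]]] hk] //; rewrite /tripod_cut /= ?eqxx ?neq.
- by move=> u v _ _; case: dd_pmetric.
by move=> u v _ _; apply: tripod_cut_lipschitz.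
Qed.

End CutWitness.

Lemma free_pnorm_values_ub_direct (dd : T -> T -> R) (S : set T) a b : S o -> S x -> S y ->
  ubound (free_pnorm_values p dd S o [:: (a, x); (b, y)])
    ((`|a| `^ p * dd x o `^ p + `|b| `^ p * dd y o `^ p) `^ p^-1).
Proof.
move=> So Sx Sy; apply: (free_pnorm_values_ub (dip := [:: (a, x, o); (b, y, o)])) => //.
- by move=> V f fo; rewrite !big_cons !big_nil fo !subr0.
- by move=> e; rewrite !inE => /orP[] /eqP ->.
by rewrite !big_cons big_nil addr0.
Qed.

Lemma tripod_free_pnorm_value (S : set T) a b :
  free_pnorm_values p d S o [:: (a, x); (b, y)] (F a b `^ p^-1).
Proof.
have := d_tri x z y; have := d_tri x z o; have := d_tri y z o.
rewrite d_xy_powR d_xo_powR d_yo_powR (d_sym x z) (d_sym y z) => tri_y tri_x tri_xy.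
have [sx [sy [s0 [sx_box sy_box s0_box [zo zx zy]]]]] := tripod_split_exists
  (ltW Lx_gt0) (ltW Ly_gt0) (ltW L0_gt0) (powR_ge0 _ _) (powR_ge0 _ _) (powR_ge0 _ _)
  tri_xy tri_x tri_y.
exact: (tripod_cut_free_pnorm_value sx_box sy_box s0_box d_pmetric
  d_xo_powR d_yo_powR d_xy_powR zo zx zy).
Qed.

Lemma tripod_value_le_free_pnorm (S : set T) a b : S o -> S x -> S y ->
  F a b `^ p^-1 <= free_pnorm p d S o [:: (a, x); (b, y)].
Proof.
move=> So Sx Sy.
exact: free_pnorm_ge (tripod_free_pnorm_value S a b)
  (@free_pnorm_values_ub_direct d S a b So Sx Sy).
Qed.

Lemma free_pnorm_dprime a b : free_pnorm p d' setT o [:: (a, x); (b, y)] = F a b `^ p^-1.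
Proof.
have Lx0 := ltW Lx_gt0; have Ly0 := ltW Ly_gt0; have L00 := ltW L0_gt0.
have W : free_pnorm_values p d' setT o [:: (a, x); (b, y)] (F a b `^ p^-1).
  apply: (tripod_cut_free_pnorm_value (sx := 0) (sy := 0) (s0 := L0) _ _ _ dprime_pmetric);
    rewrite ?lexx ?Lx0 ?Ly0 ?L00 ?dprime_powR /tripod_leg ?eqxx ?neq //=; lra.
apply/le_anti/andP; split; last first.
  exact: free_pnorm_ge W (@free_pnorm_values_ub_direct d' setT a b I I I).
apply: free_pnorm_le W (free_pnorm_values_ub
  (dip := [:: (a, x, z); (b, y, z); (a + b, z, o)]) p_gt0 _ _ _).
- move=> V f fo; rewrite !big_cons !big_nil fo subr0 !addr0 !scalerBr scalerDl.
  by rewrite /= addrA addrACA !subrK.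
- by [].
rewrite !big_cons big_nil addr0 !dprime_powR /tripod_leg ?eqxx ?neq /=.
by rewrite /tripod_value; lra.
Qed.

Lemma tripod_valueE a b : F a b =
  d x o `^ p * ((`|a + b| `^ p + `|a| `^ p - `|b| `^ p) / 2)
  + d y o `^ p * ((`|a + b| `^ p + `|b| `^ p - `|a| `^ p) / 2)
  + d x y `^ p * ((`|a| `^ p + `|b| `^ p - `|a + b| `^ p) / 2).
Proof. by rewrite d_xo_powR d_yo_powR d_xy_powR /tripod_value; field. Qed.

Lemma tripod_value_ge0 a b : 0 <= F a b.
Proof.
by rewrite /tripod_value !addr_ge0 // mulr_ge0 ?powR_ge0
  ?(ltW Lx_gt0) ?(ltW Ly_gt0) ?(ltW L0_gt0).
Qed.

Let N_o : N o. Proof. by left; left. Qed.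
Let N_x : N x. Proof. by left; right. Qed.
Let N_y : N y. Proof. by right. Qed.

Lemma dipole_free_pnorm_N_le a b : a * b = 0 \/ a = - b ->
  free_pnorm p d N o [:: (a, x); (b, y)] <= F a b `^ p^-1.
Proof.
move=> degenerate; apply: free_pnorm_le (tripod_free_pnorm_value N a b) _.
have [->|->|->] : [\/ a = 0, b = 0 | b = - a].
- case: degenerate => [/eqP|->]; last by constructor 3; rewrite opprK.
  by rewrite mulf_eq0 => /orP[] /eqP; [constructor 1 | constructor 2].
- apply: (free_pnorm_values_ub (dip := [:: (b, y, o)])) => //.
  + by move=> V f fo; rewrite !big_cons !big_nil fo scale0r add0r subr0.
  + by move=> e; rewrite inE => /eqP ->.
  rewrite big_cons big_nil addr0 d_yo_powR /tripod_value normr0 powR0p //.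
  by rewrite mul0r !add0r mulrDr.
- apply: (free_pnorm_values_ub (dip := [:: (a, x, o)])) => //.
  + by move=> V f fo; rewrite !big_cons !big_nil fo scale0r !addr0 subr0.
  + by move=> e; rewrite inE => /eqP ->.
  rewrite big_cons big_nil addr0 d_xo_powR /tripod_value normr0 powR0p //.
  by rewrite mul0r !addr0 mulrDr.
apply: (free_pnorm_values_ub (dip := [:: (a, x, y)])) => //.
- by move=> V f fo; rewrite !big_cons !big_nil !addr0 scaleNr scalerBr.
- by move=> e; rewrite inE => /eqP ->.
rewrite big_cons big_nil addr0 d_xy_powR /tripod_value normrN subrr normr0 powR0p //.
by rewrite mul0r addr0 mulrDr.
Qed.

Definition tripod_coords (u : T) : 'rV[R]_2 := \row_i [:: (u == x)%:R; (u == y)%:R]`_i.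

Lemma tripod_coords_lipschitz u v : N u -> N v ->
  tripod_gauge p Lx Ly L0 (tripod_coords u - tripod_coords v) <= d u v `^ p.
Proof.
have Lx0 := ltW Lx_gt0; have Ly0 := ltW Ly_gt0; have L00 := ltW L0_gt0.
(* t = 1 or -1 routes the dipole delta(x) - delta(y) through the edge xy; else t = 0. *)
move=> Nu Nv; apply: le_trans (tripod_gauge_le p Lx_gt0 Ly_gt0 L0_gt0 _
  (((u == x) && (v == y))%:R - ((u == y) && (v == x))%:R)) _.
case: Nu => [[]|] ->; case: Nv => [[]|] ->; rewrite !mxE /tripod_cost /= ?eqxx ?neq /=;
  rewrite ?(subrr, subr0, sub0r, addr0, add0r, opprK, addrN, addNr);
  rewrite ?(normrN, normr1, normr0, powR0p p_gt0);
  rewrite ?powR1 /= ?d_refl ?powR0p // ?(d_sym o x) ?(d_sym o y) ?(d_sym y x);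
  rewrite ?d_xo_powR ?d_yo_powR ?d_xy_powR; lra.
Qed.

Lemma tripod_value_lt_free_pnorm_N a b : a != 0 -> b != 0 -> a + b != 0 ->
  F a b `^ p^-1 < free_pnorm p d N o [:: (a, x); (b, y)].
Proof.
move=> a_neq0 b_neq0 ab_neq0.
pose v := \sum_(m <- [:: (a, x); (b, y)]) m.1 *: tripod_coords m.2.
have [va vb] : v ord0 ord0 = a /\ v ord0 ord_max = b.
  by rewrite /v !big_cons big_nil addr0 !mxE /= !eqxx !neq /= !mulr1 !mulr0 addr0 add0r.
have W : free_pnorm_values p d N o [:: (a, x); (b, y)]
    (gauge_norm p (tripod_gauge p Lx Ly L0) v).
  have Lx0 := Lx_gt0; have Ly0 := Ly_gt0; have L00 := L0_gt0.
  apply: (gauge_free_pnorm_value p_gt0 (c := Num.min Lx Ly) (C := Lx + Ly + L0)).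
  - by rewrite lt_min Lx0 Ly0.
  - by rewrite !addr_ge0 // ltW.
  - by apply: tripod_gauge_ge0.
  - by apply: tripod_gaugeZ.
  - by apply: tripod_gaugeD.
  - by apply: tripod_gauge_lb.
  - by apply: tripod_gauge_ub.
  - by apply/rowP => i; rewrite !mxE !neq; case: i => -[|[|]].
  - by move=> u w _ _; apply: d_ge0.
  exact: tripod_coords_lipschitz.
apply: lt_le_trans (free_pnorm_ge W (@free_pnorm_values_ub_direct d N a b N_o N_x N_y)).
apply: powR_ltr; [by rewrite invr_gt0 | exact: tripod_value_ge0 |].
by have := tripod_value_lt_gauge p_gt0 p_lt1 Lx_gt0 Ly_gt0 L0_gt0 (v := v); rewrite va vb; apply.
Qed.

End Tripod.

Theorem proposition3p8 (R : realType) (p : R) (T : eqType) (d : T -> T -> R)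
  (o x y z : T) :
  0 < p < 1 ->
  o != x -> o != y -> o != z -> x != y -> x != z -> y != z ->
  (forall w : T, w = o \/ w = x \/ w = y \/ w = z) ->
  is_pmetric p d ->
  d x y `^ p < d x o `^ p + d o y `^ p ->
  d o x `^ p < d o y `^ p + d y x `^ p ->
  d o y `^ p < d o x `^ p + d x y `^ p ->
  let N := [set o; x; y] in
  let d' := dprime p d o x y z in
  is_pmetric p d' /\
  (forall a b : R,
     free_pnorm p d' setT o [:: (a, x); (b, y)]
       <= free_pnorm p d setT o [:: (a, x); (b, y)]) /\
  (forall a b : R,
     free_pnorm p d' setT o [:: (a, x); (b, y)] `^ p =
       d x o `^ p * ((`|a + b| `^ p + `|a| `^ p - `|b| `^ p) / 2)
     + d y o `^ p * ((`|a + b| `^ p + `|b| `^ p - `|a| `^ p) / 2)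
     + d x y `^ p * ((`|a| `^ p + `|b| `^ p - `|a + b| `^ p) / 2)) /\
  (forall a b : R,
     free_pnorm p d' setT o [:: (a, x); (b, y)]
       = free_pnorm p d N o [:: (a, x); (b, y)]
     <-> a * b = 0 \/ a = - b).
Proof.
move=> /andP[p_gt0 p_lt1] hox hoy hoz hxy hxz hyz cover d_pmetric d_xy_lt d_ox_lt d_oy_lt N d'.
split; first by apply: dprime_pmetric.
split.
  by move=> a b; rewrite free_pnorm_dprime //; apply: (tripod_value_le_free_pnorm (z := z)).
split.
  move=> a b; rewrite free_pnorm_dprime // powRVK //; last by apply: tripod_value_ge0.
  by apply: tripod_valueE.
move=> a b; rewrite free_pnorm_dprime //; split=> [eq_N|degenerate]; last first.
  have [No Nx Ny] : [/\ N o, N x & N y] by split; [left; left | left; right | right].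
  apply/le_anti/andP; split; first by apply: (tripod_value_le_free_pnorm (z := z)).
  by apply: (dipole_free_pnorm_N_le (z := z)).
have [/eqP ab0|] := boolP (a * b == 0); first by left.
rewrite mulf_eq0 negb_or => /andP[a_neq0 b_neq0].
have [->|ab_opp] := eqVneq a (- b); first by right.
have ab_neq0 : a + b != 0 by rewrite addr_eq0.
move/eqP: eq_N; rewrite lt_eqF //.
by apply: tripod_value_lt_free_pnorm_N.
Qed.
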